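(* Fix an ordinal $\beta\leq\omega_1$ and consider $\mathbb{S}(\beta)$ with $\Lambda=\{A\subseteq I\times\beta: A_0\in\mathcal{B}(I),\ A_\alpha\in\{\emptyset,I\}\ \forall\,0<\alpha<\beta\}$. For every ordinal $\xi$: (i) if $\xi\leq\eta<\beta$, then every $\eta$-section of a member of $\mathcal{G}^\xi(\Lambda)$ is a Borel subset of $I$; (ii) if $\xi<\zeta+1<\beta$, then every $(\zeta+1)$-section of a member of $\mathcal{G}^\xi(\Lambda)$ is $\emptyset$ or $I$.
   Context: An LMP is $(S,\Sigma,\{\tau_a\}_{a\in L})$ with $L$ countable and Markov kernels $\tau_a$. $\Sigma(R)$ = $R$-closed members of $\Sigma$ ($A$ is $R$-closed if $x\in A$, $xRs\Rightarrow s\in A$); $\mathcal{R}^T(\Lambda)=\{(s,t):\forall a\,\forall E\in\Lambda\ \tau_a(s,E)=\tau_a(t,E)\}$; $\mathcal{G}(\Lambda)=\Sigma(\mathcal{R}^T(\Lambda))$, with $\mathcal{G}^0(\Lambda)=\Lambda$, $\mathcal{G}^{\alpha+1}(\Lambda)=\mathcal{G}(\mathcal{G}^\alpha(\Lambda))$, $\mathcal{G}^\lambda(\Lambda)=\sigma(\bigcup_{\alpha<\lambda}\mathcal{G}^\alpha(\Lambda))$ for limit $\lambda$. The processes $\mathbb{S}(\beta)$: $I=(0,1)$, $\mathfrak{m}$ Lebesgue measure, $V\subseteq I$ Lebesgue nonmeasurable, $\mathcal{B}_V=\sigma(\mathcal{B}(I)\cup\{V\})$, and $\mathfrak{m}_0,\mathfrak{m}_1$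 measures on $\mathcal{B}_V$ extending $\mathfrak{m}$ with $\mathfrak{m}_0(V)\neq\mathfrak{m}_1(V)$. Let $\{q_n\}_{n\in\omega}$ enumerate $\mathbb{Q}\cap I$. For ordinals $\eta$: $\alpha_n(0)=0$, $\alpha_n(\zeta+1)=\zeta$ for all $n$, and for limit $\lambda$, $(\alpha_n(\lambda))_{n\in\omega}$ is a fixed strictly increasing sequence of nonzero ordinals below $\lambda$ cofinal in $\lambda$. For an ordinal $\beta\leq\omega_1$, $\mathbb{S}(\beta)=(I\times\beta,\ \mathcal{B}_V\otimes\mathcal{P}(\beta),\ \{\tau_n\}_{n\in\omega})$ with $\tau_n((x,\eta),A)=x\cdot\mathfrak{m}_0(A_0)$ if $\eta=0$; $=\mathfrak{m}_0(A_{\alpha_n(\eta)})$ if $\eta>0$ and $x<q_n$; $=\mathfrak{m}_1(A_{\alpha_n(\eta)})$ if $\eta>0$ and $x\geq q_n$; here $A_\gamma=\{r:(r,\gamma)\in A\}$. These $\tau_n$ are Markov kernels, so $\mathbb{S}(\beta)$ is an LMP. *)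

From HB Require Import structures.
From mathcomp Require Import all_boot all_order all_algebra.
From mathcomp Require Import all_classical all_reals all_analysis.
Set Implicit Arguments.
Unset Strict Implicit.
Unset Printing Implicit Defensive.
Import Order.TTheory GRing.Theory Num.Theory.
Import numFieldNormedType.Exports.
Local Open Scope classical_set_scope.
Local Open Scope ring_scope.

(* Generic LMP notions.  An LMP has state set [D : set S] (inside an   *)
(* ambient type S), sigma-algebra [Sig] on D, labels L = nat, and      *)
(* kernels [tau a s E].                                                *)
Section LMPnotions.
Context {R : realType} {S : Type}.

Definition rel_closed (Rel : S -> S -> Prop) (A : set S) : Prop :=
  forall x s, A x -> Rel x s -> A s.

Definition Sigma_rel (Sig : set (set S)) (Rel : S -> S -> Prop) : set (set S) :=
  [set A | Sig A /\ rel_closed Rel A].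

Definition RT (D : set S) (tau : nat -> S -> set S -> \bar R)
    (Lam : set (set S)) (s t : S) : Prop :=
  D s /\ D t /\ forall (a : nat) (E : set S), Lam E -> tau a s E = tau a t E.

Definition Gop (D : set S) (Sig : set (set S))
    (tau : nat -> S -> set S -> \bar R) (Lam : set (set S)) : set (set S) :=
  Sigma_rel Sig (RT D tau Lam).
End LMPnotions.

(* Ordinals are represented by a well-ordered type O (an ordinal beta *)
(* is the well-ordered set of its elements).                          *)
Section Ordinals.
Context {d : Order.disp_t} {O : orderType d}.

Definition is_zero (x : O) : Prop := forall y, ~ (y < x)%O.
(* x = z + 1 *)
Definition is_succ (z x : O) : Prop :=
  (z < x)%O /\ forall y, ~ ((z < y)%O /\ (y < x)%O).
Definition is_limit (x : O) : Prop := ~ is_zero x /\ ~ (exists z, is_succ z x).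

(* Transfinite iteration G^xi(Lam), by well-founded recursion on O:
   G^0 = Lam, G^(z+1) = G(G^z), G^lambda = sigma(U_{a<lambda} G^a). *)
Definition Giter {R : realType} {S : Type}
    (wf : well_founded (fun x y : O => (x < y)%O))
    (D : set S) (Sig : set (set S)) (tau : nat -> S -> set S -> \bar R)
    (Lam : set (set S)) : O -> set (set S) :=
  Fix wf (fun _ => set (set S)) (fun x rec =>
    match pselect (exists z, is_succ z x) with
    | left h =>
        Gop D Sig tau (rec (proj1_sig (cid h)) (proj1 (proj2_sig (cid h))))
    | right _ =>
        if pselect (is_zero x) then Lam
        else <<s D, [set A | exists y (hy : (y < x)%O), rec y hy A] >>
    end).
End Ordinals.

Section Sbeta.
Context {R : realType}.

Definition Iset : set R := [set x | 0 < x < 1].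

Definition Borel_I (A : set R) : Prop :=
  @measurable _ (measurableTypeR R) A /\ A `<=` Iset.

(* Lebesgue measurable subsets of R (completion of Lebesgue measure) *)
Definition lebesgue_measurable (A : set R) : Prop :=
  @measurable _ (caratheodory_type (R:=R)
     (T:=lebesgue_stieltjes_measure_ocitv_type__canonical__measurable_structure_SemiRingOfSets R)
     (wlength idfun)^*%mu) A.

Definition B_V (V : set R) : set (set R) := <<s Iset, Borel_I `|` [set V] >>.

Definition measure_on {T : Type} (F : set (set T)) (mu : set T -> \bar R) : Prop :=
  mu set0 = 0%E /\ (forall A, F A -> (0 <= mu A)%E) /\
  (forall A : nat -> set T, (forall n, F (A n)) -> trivIset setT A ->
     F (\bigcup_n A n) ->
     (fun n => \sum_(0 <= i < n) mu (A i)) @ \oo --> mu (\bigcup_n A n)).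

Context {d : Order.disp_t} {O : orderType d}.

Definition Dstates : set (R * O) := Iset `*` setT.

Definition section (A : set (R * O)) (g : O) : set R := [set r | A (r, g)].

Definition SigS (V : set R) : set (set (R * O)) :=
  <<s Dstates, [set X | exists B C, B_V V B /\ X = B `*` C] >>.

Definition tauS (alpha : nat -> O -> O) (q : nat -> R)
    (m0 m1 : set R -> \bar R) (n : nat) (s : R * O) (A : set (R * O)) : \bar R :=
  if pselect (is_zero s.2) then ((s.1)%:E * m0 (section A s.2))%E
  else if s.1 < q n then m0 (section A (alpha n s.2))
  else m1 (section A (alpha n s.2)).

Definition LambdaS : set (set (R * O)) :=
  [set A | A `<=` Dstates /\
     (forall z, is_zero z -> Borel_I (section A z)) /\
     (forall a, ~ is_zero a -> section A a = set0 \/ section A a = Iset)].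
End Sbeta.

From HB Require Import structures.
From mathcomp Require Import all_boot all_order all_algebra.
From mathcomp Require Import all_classical all_reals all_analysis.
Import Order.TTheory GRing.Theory Num.Theory.
Local Open Scope classical_set_scope.
Local Open Scope ring_scope.

(* The proof is a transfinite induction on xi along the three clauses defining
   G^xi.
   - xi = 0: this is the definition of Lambda.
   - xi a limit: for a sigma-algebra C on I, the sets whose eta-section lies in
     C form a sigma-algebra on I x beta; the Borel sets and {emptyset, I} are
     such C, so both properties pass from the G^y, y < xi, to G^xi.
   - xi = z + 1: a member A of G(G^z) is closed under R^T(G^z). For eta > z we
     have alpha_n(eta) >= z for all large n, so by induction the members of G^z
     have Borel alpha_n(eta)-sections, on which m0 and m1 both agree with
     Lebesgue measure. Thus tau_n cannot separate (x, eta) from (y, eta) for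
     large n, and the eta-section of A is a union of cells of the finite
     partition of I cut by finitely many rationals q_n: a Borel set. When eta
     is a successor above z, no rational is needed and the section is trivial. *)

Section OrdinalFacts.
Context {d : Order.disp_t} {O : orderType d}.

Lemma is_succ_inj {z z' x : O} : is_succ z x -> is_succ z' x -> z = z'.
Proof.
move=> [zx zmax] [z'x z'max]; case: (ltgtP z z') => // [zz'|z'z].
- by case: (zmax z').
- by case: (z'max z).
Qed.

Lemma le_pred_of_lt {z z0 z1 : O} : is_succ z0 z1 -> (z < z1)%O -> (z <= z0)%O.
Proof. by move=> [_ z0max] zz1; case: (leP z z0) => // z0z; case: (z0max z). Qed.
End OrdinalFacts.

Section Iteration.
Context {R : realType} {S : Type} {d : Order.disp_t} {O : orderType d}.
Variable wf : well_founded (fun x y : O => (x < y)%O).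
Variables (D : set S) (Sig : set (set S)) (tau : nat -> S -> set S -> \bar R)
  (Lam : set (set S)).

Local Notation G := (Giter wf D Sig tau Lam).

Lemma Giter_unfold (x : O) : G x =
    match pselect (exists z, is_succ z x) with
    | left h => Gop D Sig tau (G (proj1_sig (cid h)))
    | right _ =>
        if pselect (is_zero x) then Lam
        else <<s D, [set A | exists y (hy : (y < x)%O), G y A] >>
    end.
Proof.
rewrite /Giter Fix_eq // => y f g fg; case: pselect => [h|_]; first by rewrite fg.
destruct (pselect (is_zero y)) => //.
congr (<<s D, _>>); apply/funext => A; apply/propext.
by split=> -[z [hz zA]]; exists z, hz; rewrite ?fg // -fg.
Qed.

Lemma Giter_zero {x : O} : is_zero x -> G x = Lam.
Proof.
move=> x0; rewrite Giter_unfold.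
destruct (pselect (exists z, is_succ z x)) as [h|_].
  by exfalso; case: h => z [zx _]; case: (x0 z).
by destruct (pselect (is_zero x)).
Qed.

Lemma Giter_succ {z x : O} : is_succ z x -> G x = Gop D Sig tau (G z).
Proof.
move=> zx; rewrite Giter_unfold.
destruct (pselect (exists z, is_succ z x)) as [h|h].
  by rewrite (is_succ_inj (proj2_sig (cid h)) zx).
by exfalso; apply: h; exists z.
Qed.

Lemma Giter_limit {x : O} : ~ is_zero x -> ~ (exists z, is_succ z x) ->
  G x = <<s D, [set A | exists y (hy : (y < x)%O), G y A] >>.
Proof.
move=> xn0 xns; rewrite Giter_unfold.
by destruct (pselect (exists z, is_succ z x)); last destruct (pselect (is_zero x)).
Qed.
End Iteration.

Lemma generated_sub (T : Type) (D : set T) (Gen : set (set T)) :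
  (forall A, Gen A -> A `<=` D) -> forall A, <<s D, Gen >> A -> A `<=` D.
Proof.
move=> GenD; apply: (@smallest_sub _ (sigma_algebra D) Gen [set A | A `<=` D]) => //.
by split => //= F FD x [n _ /FD].
Qed.

Section Sections.
Context {R : realType} {d : Order.disp_t} {O : orderType d}.

Lemma Iset_measurable : measurable (@Iset R).
Proof.
have -> : @Iset R = [set` `]0, 1[%R] by apply/seteqP; split => x; rewrite /= in_itv.
exact: measurable_itv.
Qed.

Lemma Borel_I_sigma_algebra : sigma_algebra Iset (@Borel_I R).
Proof.
split.
- by split; [exact: measurable0 | move=> ? []].
- by move=> A [mA _]; split; [exact: measurableD Iset_measurable mA | move=> ? []].
- move=> F BF; split; first by apply: bigcupT_measurable => k; case: (BF k).
  by move=> r [k _ Fkr]; case: (BF k) => _; apply.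
Qed.

Lemma trivial_sigma_algebra :
  sigma_algebra Iset [set X : set R | X = set0 \/ X = Iset].
Proof.
split; first by left.
- by move=> A [->|->]; [right; rewrite setD0 | left; rewrite setDv].
- move=> F trivF; have [[k Fk]|noI] := pselect (exists k, F k = Iset).
    right; apply/seteqP; split; last by move=> r Ir; exists k; rewrite ?Fk.
    by move=> r [j _]; case: (trivF j) => ->.
  left; apply/seteqP; split => // r [j _]; case: (trivF j) => [->//|FjI].
  by case: noI; exists j.
Qed.

Lemma sectionD (A : set (R * O)) (eta : O) :
  section (Dstates `\` A) eta = Iset `\` section A eta.
Proof. by apply/seteqP; split => r [Dr nAr]; split => //; case: Dr. Qed.

Lemma section_bigcup (F : nat -> set (R * O)) (eta : O) :
  section (\bigcup_k F k) eta = \bigcup_k section (F k) eta.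
Proof. by apply/seteqP; split => r /= [k _ Fkr]; exists k. Qed.

Lemma sigma_algebra_section (C : set (set R)) (eta : O) :
  sigma_algebra Iset C -> sigma_algebra Dstates [set A | C (section A eta)].
Proof.
move=> [C0 CD CU]; split => //= [A CA|F CF].
- by rewrite sectionD; exact: CD.
- by rewrite section_bigcup; exact: CU.
Qed.

Lemma generated_section (C : set (set R)) (eta : O) (Gen : set (set (R * O))) :
  sigma_algebra Iset C -> (forall A, Gen A -> C (section A eta)) ->
  forall A, <<s Dstates, Gen >> A -> C (section A eta).
Proof.
move=> sC GenC; apply: (smallest_sub (sigma_algebra_section C eta sC)) => A.
exact: GenC.
Qed.

Lemma SigS_sub {V : set R} : V `<=` Iset ->
  forall A, SigS V A -> A `<=` (@Dstates R d O).
Proof.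
move=> VI; apply: generated_sub => _ [B [C [BVB ->]]] [r g] [/= Br _]; split => //.
by apply: generated_sub BVB _ Br => E [[]|->].
Qed.
End Sections.

Section Saturation.
Context {R : realType}.
Variable q : nat -> R.

Definition agree_upto (N : nat) (x y : R) : Prop :=
  forall n, (n < N)%N -> (x < q n) = (y < q n).

Definition saturated (N : nat) (X : set R) : Prop :=
  X `<=` Iset /\
  forall x y, Iset x -> Iset y -> agree_upto N x y -> X x -> X y.

Lemma saturated0_trivial {X : set R} : saturated 0 X -> X = set0 \/ X = Iset.
Proof.
move=> [XI satX]; have [[x Xx]|noX] := pselect (exists x, X x).
- right; apply/seteqP; split => // y Iy.
  by apply: (satX x y (XI x Xx) Iy) => // n; rewrite ltn0.
- by left; apply/seteqP; split => // y Xy; case: noX; exists y.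
Qed.

Lemma saturated_split {N : nat} {X : set R} : saturated N.+1 X ->
  exists X1 X2, [/\ saturated N X1, saturated N X2 &
    X = (X1 `&` [set` `]-oo, q N[%R]) `|` (X2 `&` [set` `[q N, +oo[%R])].
Proof.
move=> [XI satX].
pose side (b : bool) := [set y | Iset y /\ exists x, [/\ X x, (x < q N) = b &
  agree_upto N x y]].
have satside b : saturated N (side b).
  split=> [y []//|x y _ Iy xy [_ [w [Xw wb wx]]]]; split => //; exists w.
  by split=> // n nN; rewrite wx // xy.
exists (side true), (side false); split => //.
apply/seteqP; split => y.
- move=> Xy; have Iy := XI y Xy; have [yq|yq] := ltP y (q N).
  + left; split; last by rewrite /= in_itv /= yq.
    by split => //; exists y; rewrite yq.
  + right; split; last by rewrite /= in_itv /= yq.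
    by split => //; exists y; rewrite ltNge yq.
- have agree_last x b : (x < q N) = b -> agree_upto N x y ->
      (y < q N) = b -> agree_upto N.+1 x y.
    move=> xb xy yb n; rewrite ltnS leq_eqVlt => /orP[/eqP->|nN].
    + by rewrite xb yb.
    + exact: xy.
  case=> -[[Iy [x [Xx xb xy]]]]; rewrite /= in_itv /= ?andbT => yq.
  + exact: (satX x y (XI x Xx) Iy (agree_last x _ xb xy yq) Xx).
  + apply: (satX x y (XI x Xx) Iy (agree_last x _ xb xy _) Xx).
    by rewrite ltNge yq.
Qed.

Lemma saturated_measurable {N : nat} {X : set R} : saturated N X -> measurable X.
Proof.
elim: N X => [|N IH] X satX.
  case: (saturated0_trivial satX) => ->; first exact: measurable0.
  exact: Iset_measurable.
have [X1 [X2 [/IH mX1 /IH mX2 ->]]] := saturated_split satX.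
by apply: measurableU; apply: measurableI => //; exact: measurable_itv.
Qed.
End Saturation.

Section ProcessS.
Context {R : realType} {d : Order.disp_t} {O : orderType d}.
Variable wf : well_founded (fun x y : O => (x < y)%O).
Variable alpha : nat -> O -> O.
Hypothesis alpha_succ : forall n z x, is_succ z x -> alpha n x = z.
Hypothesis alpha_lim_incr : forall n l, is_limit l -> (alpha n l < alpha n.+1 l)%O.
Hypothesis alpha_lim_cof : forall l y, is_limit l -> (y < l)%O ->
  exists n, (y <= alpha n l)%O.
Variables (q : nat -> R) (V : set R) (m0 m1 : set R -> \bar R).
Hypothesis V_sub : V `<=` Iset.
Hypothesis m0_ext : forall A, Borel_I A -> m0 A = lebesgue_measure A.
Hypothesis m1_ext : forall A, Borel_I A -> m1 A = lebesgue_measure A.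

Local Notation tau := (tauS alpha q m0 m1).
Local Notation G := (Giter wf Dstates (SigS V) tau LambdaS).

(* Any z below a nonzero eta is eventually below alpha_n(eta): at a successor
   alpha_n(eta) is the predecessor, at a limit the alpha_n(eta) increase
   cofinally. *)
Lemma alpha_eventually_above {z eta : O} : (z < eta)%O -> ~ is_zero eta ->
  exists N, forall n, (N <= n)%N -> (z <= alpha n eta)%O.
Proof.
move=> zeta eta0; have [[e eeta]|nsucc] := pselect (exists e, is_succ e eta).
  exists 0%N => n _; rewrite (alpha_succ n _ _ eeta).
  exact: le_pred_of_lt eeta zeta.
have eta_lim : is_limit eta by split.
have [N zN] := alpha_lim_cof _ _ eta_lim zeta; exists N => n Nn.
apply: le_trans zN _; apply: (Order.NatMonotonyTheory.nondecnP (f := alpha^~ eta)) Nn.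
by move=> i; apply/ltW/alpha_lim_incr.
Qed.

(* If, for all n >= N, every set of Lam has a Borel alpha_n(eta)-section, then
   no tau_n distinguishes (x, eta) from (y, eta) as soon as x and y agree on
   the first N rationals: for n < N both points use the same measure, and for
   n >= N the measures m0 and m1 coincide with Lebesgue measure on the
   relevant sections. *)
Lemma RT_same_level {Lam : set (set (R * O))} {eta : O} {N : nat} :
  ~ is_zero eta ->
  (forall n, (N <= n)%N -> forall E, Lam E -> Borel_I (section E (alpha n eta))) ->
  forall x y, Iset x -> Iset y -> agree_upto q N x y ->
  RT Dstates tau Lam (x, eta) (y, eta).
Proof.
move=> eta0 LamB x y Ix Iy xy; do 2 (split; first by split).
move=> n E LamE; rewrite /tauS /=; destruct (pselect (is_zero eta)) => //.
have [nN|Nn] := ltnP n N; first by rewrite xy.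
have EB := LamB n Nn E LamE.
by case: ifP; case: ifP; rewrite ?m0_ext ?m1_ext.
Qed.

Lemma Gop_section_saturated (Lam : set (set (R * O))) (eta : O) (N : nat) :
  ~ is_zero eta ->
  (forall n, (N <= n)%N -> forall E, Lam E -> Borel_I (section E (alpha n eta))) ->
  forall A, Gop Dstates (SigS V) tau Lam A -> saturated q N (section A eta).
Proof.
move=> eta0 LamB A [SigA closedA]; split.
  by move=> r /(SigS_sub V_sub A SigA) [].
move=> x y Ix Iy xy Ax; apply: closedA Ax _.
exact: RT_same_level eta0 LamB x y Ix Iy xy.
Qed.

Definition borel_sections (xi : O) : Prop :=
  forall eta, (xi <= eta)%O -> forall A, G xi A -> Borel_I (section A eta).

Definition trivial_succ_sections (xi : O) : Prop :=
  forall z z1, is_succ z z1 -> (xi < z1)%O -> forall A, G xi A ->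
    section A z1 = set0 \/ section A z1 = Iset.

Lemma sections_zero (xi : O) : is_zero xi ->
  borel_sections xi /\ trivial_succ_sections xi.
Proof.
move=> xi0; rewrite /borel_sections /trivial_succ_sections Giter_zero //.
split=> [eta _ A [_ [A0 Atriv]]|z z1 [zz1 _] _ A [_ [_ Atriv]]].
- have [/A0 //|eta0] := pselect (is_zero eta).
  by case: (Atriv _ eta0) => ->; split => //; exact: Iset_measurable.
- by apply: Atriv => z10; case: (z10 z).
Qed.

Lemma sections_succ (z xi : O) : is_succ z xi -> borel_sections z ->
  borel_sections xi /\ trivial_succ_sections xi.
Proof.
move=> zxi Bz.
rewrite /borel_sections /trivial_succ_sections (Giter_succ _ _ _ _ _ zxi).
have above (eta : O) : (z < eta)%O -> ~ is_zero eta.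
  by move=> zeta eta0; case: (eta0 z).
have sat (eta : O) N : (z < eta)%O ->
    (forall n, (N <= n)%N -> (z <= alpha n eta)%O) ->
    forall A, Gop Dstates (SigS V) tau (G z) A -> saturated q N (section A eta).
  move=> zeta zN; apply: Gop_section_saturated (above _ zeta) _.
  by move=> n Nn E GzE; apply: Bz GzE; exact: zN.
split=> [eta xieta A GA|z0 z1 z0z1 xiz1 A GA].
- have zeta := lt_le_trans (proj1 zxi) xieta.
  have [N zN] := alpha_eventually_above zeta (above _ zeta).
  have [AI satA] := sat _ _ zeta zN A GA.
  by split; first exact: saturated_measurable (conj AI satA).
- have zz1 := lt_trans (proj1 zxi) xiz1.
  apply: saturated0_trivial (sat _ _ zz1 _ A GA) => n _.
  by rewrite (alpha_succ n _ _ z0z1); exact: le_pred_of_lt z0z1 zz1.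
Qed.

Lemma sections_limit (xi : O) : ~ is_zero xi -> ~ (exists z, is_succ z xi) ->
  (forall y, (y < xi)%O -> borel_sections y /\ trivial_succ_sections y) ->
  borel_sections xi /\ trivial_succ_sections xi.
Proof.
move=> xi0 xins IH; rewrite /borel_sections /trivial_succ_sections Giter_limit //.
split=> [eta xieta|z z1 zz1 xiz1].
- apply: generated_section Borel_I_sigma_algebra _ => A [y [yxi GyA]].
  by apply: (proj1 (IH y yxi)) GyA; exact: ltW (lt_le_trans yxi xieta).
- apply: generated_section trivial_sigma_algebra _ => A [y [yxi GyA]].
  by apply: (proj2 (IH y yxi)) zz1 _ A GyA; exact: lt_trans yxi xiz1.
Qed.

Lemma sections_all (xi : O) : borel_sections xi /\ trivial_succ_sections xi.
Proof.
elim/(well_founded_ind wf): xi => xi IH.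
have [[z zxi]|xins] := pselect (exists z, is_succ z xi).
  exact: sections_succ zxi (proj1 (IH z (proj1 zxi))).
have [xi0|xin0] := pselect (is_zero xi); first exact: sections_zero.
exact: sections_limit.
Qed.
End ProcessS.

Theorem lemma5p6
  (R : realType) (d : Order.disp_t) (O : orderType d)
  (* O is the ordinal beta: a well-order ... *)
  (wfO : well_founded (fun x y : O => (x < y)%O))
  (* ... with beta <= omega_1 *)
  (ctblO : forall x : O, countable [set y : O | (y < x)%O])
  (* the sequences alpha_n *)
  (alpha : nat -> O -> O)
  (alpha_zero : forall n x, is_zero x -> alpha n x = x)
  (alpha_succ : forall n z x, is_succ z x -> alpha n x = z)
  (alpha_lim_lt : forall n l, is_limit l ->
     ~ is_zero (alpha n l) /\ (alpha n l < l)%O)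
  (alpha_lim_incr : forall n l, is_limit l -> (alpha n l < alpha n.+1 l)%O)
  (alpha_lim_cof : forall l y, is_limit l -> (y < l)%O ->
     exists n, (y <= alpha n l)%O)
  (* enumeration of Q cap I *)
  (q : nat -> R) (q_inj : injective q)
  (q_range : range q = [set x | Iset x /\ exists r : rat, x = ratr r])
  (* the nonmeasurable set V and the measures m0, m1 *)
  (V : set R) (V_sub : V `<=` Iset) (V_nonmeas : ~ lebesgue_measurable V)
  (m0 m1 : set R -> \bar R)
  (m0_meas : measure_on (B_V V) m0) (m1_meas : measure_on (B_V V) m1)
  (m0_ext : forall A, Borel_I A -> m0 A = lebesgue_measure A)
  (m1_ext : forall A, Borel_I A -> m1 A = lebesgue_measure A)
  (m01 : m0 V <> m1 V) :
  let G := Giter wfO (@Dstates R d O) (SigS V) (tauS alpha q m0 m1)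
             (@LambdaS R d O) in
  (forall (xi eta : O), (xi <= eta)%O ->
     forall A, G xi A -> Borel_I (section A eta)) /\
  (forall (xi z z1 : O), is_succ z z1 -> (xi < z1)%O ->
     forall A, G xi A -> section A z1 = set0 \/ section A z1 = Iset).
Proof.
move=> G; have sections := sections_all wfO alpha alpha_succ alpha_lim_incr
  alpha_lim_cof q V m0 m1 V_sub m0_ext m1_ext.
by split=> [xi|xi]; [exact: (proj1 (sections xi)) | exact: (proj2 (sections xi))].
Qed.
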